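(* Let $G$ be a simple connected graph with $n\ge 3$ vertices and $m$ edges, and let $c=m-n+1$. If $c\le (n-1)/2$, then $$\rho_{ABC}(G)\le \sqrt{n-2+\frac{2c}{n-1}}.$$
   Context: For a simple connected graph $G$ with vertex set $\{v_1,\dots,v_n\}$ and degrees $d_i$, the ABC matrix is $M(G)=(m_{ij})_{n\times n}$ with $m_{ij}=\sqrt{(d_i+d_j-2)/(d_id_j)}$ if $v_iv_j$ is an edge and $m_{ij}=0$ otherwise. The ABC spectral radius $\rho_{ABC}(G)$ is the largest eigenvalue of $M(G)$. A connected graph with $n$ vertices and $m$ edges is called $c$-cyclic where $c=m-n+1$. *)

From mathcomp Require Import all_boot all_order all_algebra.
From mathcomp Require Import reals.
Set Implicit Arguments. Unset Strict Implicit. Unset Printing Implicit Defensive.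
Import Order.TTheory GRing.Theory Num.Theory.
Local Open Scope ring_scope.

Definition simple_graph (T : finType) (e : rel T) : Prop :=
  symmetric e /\ irreflexive e.

Definition connected_graph (T : finType) (e : rel T) : Prop :=
  forall x y : T, connect e x y.

Definition deg (T : finType) (e : rel T) (v : T) : nat := #|[set u | e v u]|.

Definition edge_set (T : finType) (e : rel T) : {set {set T}} :=
  [set E : {set T} | [exists x, exists y, (E == [set x; y]) && e x y]].
Definition nedges (T : finType) (e : rel T) : nat := #|edge_set e|.

Definition cyclomatic (R : realType) (T : finType) (e : rel T) : R :=
  (nedges e)%:R - #|T|%:R + 1.

Definition abc_matrix (R : realType) (T : finType) (e : rel T)
  : 'M[R]_#|T| :=
  \matrix_(i, j)
    (if e (enum_val i) (enum_val j) then
       Num.sqrt (((deg e (enum_val i))%:R + (deg e (enum_val j))%:R - 2)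
                 / ((deg e (enum_val i))%:R * (deg e (enum_val j))%:R))
     else 0).

From mathcomp Require Import all_boot all_order all_algebra.
From mathcomp Require Import reals ring lra.
Set Implicit Arguments. Unset Strict Implicit. Unset Printing Implicit Defensive.
Import Order.TTheory GRing.Theory Num.Theory.
Local Open Scope ring_scope.

(* Let x be an eigenvector of M(G) for the eigenvalue l, and let S_v be the sum
   of the degrees of the neighbours of v.  Cauchy-Schwarz with weights d_u at
   each vertex v gives (l x_v)^2 <= (S_v/d_v + d_v - 2) sum_{u~v} x_u^2/d_u;
   summing over v counts each x_u^2/d_u exactly d_u times, hence
   l^2 <= max_v (S_v/d_v + d_v - 2).  Since every non-neighbour of v has degree
   at least 1, S_v <= 2m - n + 1, and trivially S_v <= d_v (n - 1); using the
   first bound when d_v (n - 1) >= 2m - n + 1 and the second otherwise yields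
   S_v/d_v + d_v <= n + 2c/(n - 1). *)

Lemma eq_set2 (T : finType) (a b x y : T) : x != y ->
  ([set a; b] == [set x; y]) = ((a == x) && (b == y)) || ((a == y) && (b == x)).
Proof.
move=> xy; apply/eqP/idP => [E | ]; last first.
  by case/orP=> /andP[/eqP -> /eqP ->] //; exact: setUC.
have : [set x; y] \subset [set a; b] by rewrite E.
have : a \in [set x; y] by rewrite -E set21.
have : b \in [set x; y] by rewrite -E set22.
rewrite !inE => /orP[]/eqP-> /orP[]/eqP->; rewrite !eqxx ?orbT // setUid.
all: by move/subset_leq_card; rewrite cards2 xy cards1.
Qed.

Section Degrees.
Variables (T : finType) (e : rel T).

Lemma sum_nbr_const (V : nmodType) t (c : V) : \sum_(s | e t s) c = c *+ deg e t.
Proof. by rewrite /deg -sumr_const; apply: eq_bigl => s; rewrite inE. Qed.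

Lemma sum_sum_nbr (V : nmodType) (f : T -> V) : symmetric e ->
  \sum_t \sum_(s | e t s) f s = \sum_s f s *+ deg e s.
Proof.
move=> e_sym; rewrite (exchange_big_dep xpredT) //=; apply: eq_bigr => s _.
by rewrite -sum_nbr_const; apply: eq_bigl => t; rewrite e_sym.
Qed.

Lemma handshake : simple_graph e -> (\sum_t deg e t = (nedges e).*2)%N.
Proof.
case=> e_sym e_irr.
have -> : (\sum_t deg e t = \sum_(q : T * T | e q.1 q.2) 1)%N.
  rewrite (eq_bigr (fun t => \sum_(s | e t s) 1)%N) ?pair_big_dep //= => t _.
  by rewrite sum_nbr_const natn.
rewrite (partition_big (fun q : T * T => [set q.1; q.2]) (mem (edge_set e))) /=.
  rewrite /nedges -muln2 -sum_nat_const; apply: eq_bigr => E.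
  rewrite inE => /existsP[x /existsP[y /andP[/eqP-> exy]]].
  have xy : x != y by apply: contraTneq exy => ->; rewrite e_irr.
  have -> : 2%N = #|[set (x, y); (y, x)]| by rewrite cards2 xpair_eqE negb_and xy.
  rewrite -sum1_card.
  apply: eq_bigl => -[a b] /=; rewrite eq_set2 // !inE !xpair_eqE.
  by apply/andb_idl => /orP[] /andP[/eqP-> /eqP->]; rewrite // e_sym.
move=> [a b] eab; rewrite inE; apply/existsP; exists a; apply/existsP; exists b.
by rewrite eqxx.
Qed.

Lemma deg_lt_card t : irreflexive e -> (deg e t < #|T|)%N.
Proof.
move=> e_irr; rewrite /deg -cardsT; apply: proper_card; rewrite properT.
by apply/eqP => full; have := in_setT t; rewrite -full inE e_irr.
Qed.

Lemma connected_deg_gt0 t : connected_graph e -> (1 < #|T|)%N -> (0 < deg e t)%N.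
Proof.
move=> e_conn T_gt1.
have /card_gt0P[u] : (0 < #|predC1 t|)%N by rewrite cardC1 -subn1 subn_gt0.
rewrite inE => ut.
have /connectP[[|s p] /= ] := e_conn t u.
  by move=> _ ut'; rewrite ut' eqxx in ut.
by case/andP=> ets _ _; apply/card_gt0P; exists s; rewrite inE.
Qed.

Definition sum_nbr_deg t : nat := \sum_(s | e t s) deg e s.

Lemma sum_nbr_deg_add_deg t : irreflexive e ->
  (sum_nbr_deg t + deg e t <= deg e t * #|T|)%N.
Proof.
move=> e_irr; have -> : (deg e t * #|T| = \sum_(s | e t s) #|T|)%N.
  by rewrite sum_nbr_const -mulr_natr natn mulnC.
rewrite -[deg e t]natn -sum_nbr_const -big_split /=.
by apply: leq_sum => s _; rewrite addn1; apply: deg_lt_card.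
Qed.

Lemma sum_nbr_deg_add_card t : simple_graph e -> (forall s, 0 < deg e s)%N ->
  (sum_nbr_deg t + #|T| <= (nedges e).*2 + 1)%N.
Proof.
move=> [e_sym e_irr] deg_gt0.
rewrite -handshake // (bigID (e t)) /= -/(sum_nbr_deg t).
rewrite -addnA leq_add2l (bigD1 t) ?e_irr //=.
have card_T : #|T| = (deg e t + \sum_(s | ~~ e t s && (s != t)) 1 + 1)%N.
  rewrite -sum1_card (bigID (e t)) (bigD1 t (negbT (e_irr t))) /= sum_nbr_const natn.
  by rewrite addnCA addnC.
by rewrite card_T leq_add2r leq_add2l; apply: leq_sum.
Qed.

End Degrees.

Lemma weighted_cauchy_schwarz (R : realFieldType) (I : finType) (P : pred I)
    (p y w : I -> R) :
  (forall i, P i -> 0 < w i) ->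
  (\sum_(i | P i) p i * y i) ^+ 2 <=
    (\sum_(i | P i) p i ^+ 2 * w i) * (\sum_(i | P i) y i ^+ 2 / w i).
Proof.
move=> w_gt0; have w_neq0 i : P i -> w i != 0 by move/w_gt0/lt0r_neq0.
set A := \sum_(i | P i) p i ^+ 2 * w i; set C := \sum_(i | P i) y i ^+ 2 / w i.
set S := \sum_(i | P i) p i * y i.
have pw_ge0 i : P i -> 0 <= p i ^+ 2 * w i.
  by move/w_gt0/ltW; apply: mulr_ge0 (sqr_ge0 _).
have [A0 | A_neq0] := eqVneq A 0.
  suff -> : S = 0 by rewrite expr0n A0 mul0r.
  apply: big1 => i Pi; move/eqP: (psumr_eq0P pw_ge0 A0 Pi).
  by rewrite mulf_eq0 sqrf_eq0 (negbTE (w_neq0 i Pi)) orbF => /eqP->; rewrite mul0r.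
have A_gt0 : 0 < A by rewrite lt_def A_neq0 sumr_ge0.
have : 0 <= \sum_(i | P i) w i * (A * y i / w i - S * p i) ^+ 2.
  by apply: sumr_ge0 => i /w_gt0/ltW w_ge0; apply: mulr_ge0 w_ge0 (sqr_ge0 _).
rewrite (eq_bigr (fun i => A ^+ 2 * (y i ^+ 2 / w i) - 2 * A * S * (p i * y i)
                           + S ^+ 2 * (p i ^+ 2 * w i))); last first.
  by move=> i Pi; field; apply: w_neq0.
rewrite big_split sumrB /= -!mulr_sumr -/A -/C -/S.
have -> : A ^+ 2 * C - 2 * A * S * S + S ^+ 2 * A = A * (A * C - S ^+ 2) by ring.
by rewrite pmulr_rge0 // subr_ge0.
Qed.

Lemma ratio_add_le (R : realFieldType) (N K D S : R) :
  0 < D -> D <= N -> S <= K -> S <= D * N -> S / D + D <= N + K / N.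
Proof.
move=> D_gt0 DN SK SDN; have N_gt0 : 0 < N := lt_le_trans D_gt0 DN.
have [KDN | DNK] := lerP K (D * N).
  apply: le_trans (_ : K / D + D <= _); first by rewrite lerD2r ler_pM2r ?invr_gt0.
  rewrite -subr_ge0 (_ : _ - _ = (N - D) * (D * N - K) / (D * N)); last first.
    by field; rewrite !gt_eqF.
  by rewrite divr_ge0 ?mulr_ge0 ?subr_ge0 // ltW ?mulr_gt0.
apply: lerD; first by rewrite ler_pdivrMr // mulrC.
by rewrite ler_pdivlMr // ltW.
Qed.

Lemma sum_enum_rank (V : nmodType) (T : finType) (F : 'I_#|T| -> V) :
  \sum_t F (enum_rank t) = \sum_i F i.
Proof. by rewrite [RHS](reindex enum_rank) //; exact: onW_bij (enum_rank_bij T). Qed.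

Definition abc_local_bound (R : fieldType) (T : finType) (e : rel T) (t : T) : R :=
  (sum_nbr_deg e t)%:R / (deg e t)%:R + (deg e t)%:R - 2.

Definition abc_weight (R : rcfType) (T : finType) (e : rel T) (s t : T) : R :=
  if e s t then
    Num.sqrt (((deg e s)%:R + (deg e t)%:R - 2) / ((deg e s)%:R * (deg e t)%:R))
  else 0.

Section ABCSpectralBound.
Variables (R : rcfType) (T : finType) (e : rel T).
Hypotheses (e_sym : symmetric e) (deg_gt0 : forall t, (0 < deg e t)%N).
Local Notation d t := ((deg e t)%:R : R).

Lemma abc_weight_sqr_mul_deg s t :
  e s t -> abc_weight R e s t ^+ 2 * d s = (d s + d t - 2) / d t.
Proof.
move=> est; have ds_ge1 : 1 <= d s by rewrite ler1n.
have dt_ge1 : 1 <= d t by rewrite ler1n.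
rewrite /abc_weight est sqr_sqrtr; last by apply: divr_ge0; nra.
by field; rewrite !pnatr_eq0 -!lt0n !deg_gt0.
Qed.

Lemma sum_abc_weight_sqr t :
  \sum_(s | e t s) abc_weight R e s t ^+ 2 * d s = abc_local_bound R e t.
Proof.
have dt_neq0 : d t != 0 by rewrite pnatr_eq0 -lt0n.
rewrite (eq_bigr (fun s => d s / d t + (d t - 2) / d t)) => [|s ets]; last first.
  by rewrite abc_weight_sqr_mul_deg 1?e_sym // -addrA mulrDl.
rewrite big_split /= -mulr_suml sum_nbr_const -[X in _ + X]mulr_natr divfK //.
by rewrite -natr_sum addrA.
Qed.

Lemma abc_eigen_vertex_le (x : T -> R) lambda t :
  lambda * x t = \sum_s x s * abc_weight R e s t ->
  (lambda * x t) ^+ 2 <=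
    abc_local_bound R e t * \sum_(s | e t s) x s ^+ 2 / d s.
Proof.
move=> ->; rewrite -sum_abc_weight_sqr.
have -> : \sum_s x s * abc_weight R e s t =
          \sum_(s | e t s) abc_weight R e s t * x s.
  rewrite [RHS]big_mkcond; apply: eq_bigr => s _.
  by rewrite /abc_weight (e_sym s t) mulrC; case: (e t s); rewrite ?mul0r.
by apply: weighted_cauchy_schwarz => s _; rewrite ltr0n.
Qed.

Lemma abc_eigen_sqr_le (x : T -> R) lambda (B : R) :
  (forall t, lambda * x t = \sum_s x s * abc_weight R e s t) ->
  (forall t, abc_local_bound R e t <= B) ->
  lambda ^+ 2 * \sum_t x t ^+ 2 <= B * \sum_t x t ^+ 2.
Proof.
move=> eig le_B.
have double_count : \sum_t \sum_(s | e t s) x s ^+ 2 / d s = \sum_t x t ^+ 2.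
  rewrite sum_sum_nbr //; apply: eq_bigr => s _.
  by rewrite -[LHS]mulr_natr divfK // pnatr_eq0 -lt0n.
rewrite -[in X in _ <= X]double_count !mulr_sumr; apply: ler_sum => t _.
rewrite -exprMn; apply: le_trans (abc_eigen_vertex_le (eig t)) _.
apply: ler_wpM2r (le_B t).
by apply: sumr_ge0 => s _; apply: divr_ge0 (sqr_ge0 _) (ler0n _ _).
Qed.

End ABCSpectralBound.

Lemma abc_eigenvector (R : realType) (T : finType) (e : rel T) lambda :
  eigenvalue (abc_matrix R e) lambda ->
  exists2 x : T -> R, 0 < \sum_t x t ^+ 2 &
    forall t, lambda * x t = \sum_s x s * abc_weight R e s t.
Proof.
case/eigenvalueP => v vM v_neq0; exists (fun t => v 0 (enum_rank t)).
  rewrite (sum_enum_rank (fun i => v 0 i ^+ 2)) lt_def sumr_ge0 ?andbT;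
    last by move=> i _; apply: sqr_ge0.
  apply: contra v_neq0 => /eqP sum0; apply/eqP/rowP => i; rewrite mxE.
  apply/eqP; rewrite -sqrf_eq0; apply/eqP/(psumr_eq0P _ sum0) => // j _.
  exact: sqr_ge0.
move=> t; have := congr1 (fun u : 'rV_#|T| => u 0 (enum_rank t)) vM.
rewrite /= !mxE => <-; rewrite -sum_enum_rank; apply: eq_bigr => s _.
by rewrite !mxE !enum_rankK.
Qed.

Lemma abc_eigenvalue_le_sqrt (R : realType) (T : finType) (e : rel T)
    lambda (B : R) :
  symmetric e -> (forall t, 0 < deg e t)%N ->
  (forall t, abc_local_bound R e t <= B) ->
  eigenvalue (abc_matrix R e) lambda -> lambda <= Num.sqrt B.
Proof.
move=> e_sym deg_gt0 le_B /abc_eigenvector[x x_gt0 eig].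
have := abc_eigen_sqr_le e_sym deg_gt0 eig le_B; rewrite ler_pM2r // => lambda2_le.
by apply: le_trans (ler_norm lambda) _; rewrite -sqrtr_sqr ler_wsqrtr.
Qed.

Lemma abc_local_bound_le (R : realType) (T : finType) (e : rel T) t :
  simple_graph e -> (forall s, 0 < deg e s)%N ->
  abc_local_bound R e t <= #|T|%:R - 2 + 2 * cyclomatic R e / (#|T|%:R - 1).
Proof.
move=> sg deg_gt0; have e_irr := proj2 sg.
have := sum_nbr_deg_add_card t sg deg_gt0.
have := sum_nbr_deg_add_deg t e_irr.
have := deg_lt_card t e_irr.
rewrite -!(ler_nat R) -addn1 -mul2n !natrD !natrM => D_lt S_le_DN S_le_K.
have D_gt0 : 0 < (deg e t)%:R :> R by rewrite ltr0n.
set N : R := #|T|%:R - 1; set K : R := 2 * (nedges e)%:R - #|T|%:R + 1.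
have N_gt0 : 0 < N by rewrite /N; lra.
have : (sum_nbr_deg e t)%:R / (deg e t)%:R + (deg e t)%:R <= N + K / N.
  by apply: ratio_add_le; rewrite // /N /K; lra.
have -> : 2 * cyclomatic R e / N = K / N - 1.
  by rewrite /cyclomatic /K /N; field; rewrite gt_eqF.
rewrite /abc_local_bound /N; lra.
Qed.

Theorem corollary2p2 (R : realType) (T : finType) (e : rel T) :
  simple_graph e -> connected_graph e -> (3 <= #|T|)%N ->
  cyclomatic R e <= (#|T|%:R - 1) / 2 ->
  forall lambda : R, eigenvalue (abc_matrix R e) lambda ->
    lambda <= Num.sqrt (#|T|%:R - 2 + 2 * cyclomatic R e / (#|T|%:R - 1)).
Proof.
move=> sg e_conn T_ge3 _ lambda.
have deg_gt0 t := connected_deg_gt0 t e_conn (ltnW T_ge3).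
apply: (abc_eigenvalue_le_sqrt (proj1 sg) deg_gt0) => t.
exact: abc_local_bound_le.
Qed.
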